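(* Let $n\ge 2$ and $\pi\in RC(n)$. If $\pi$ is alternating ($\pi_1<\pi_2>\pi_3<\cdots$), then for every $i$ with $1<i<n$: $\pi_i>\max(\pi_1,\pi_n)$ if $i$ is even and $\pi_i<\min(\pi_1,\pi_n)$ if $i$ is odd. If $\pi$ is reverse-alternating ($\pi_1>\pi_2<\pi_3>\cdots$), then for every $i$ with $1<i<n$: $\pi_i<\min(\pi_1,\pi_n)$ if $i$ is even and $\pi_i>\max(\pi_1,\pi_n)$ if $i$ is odd.
   Context: Permutations of $[n]=\{1,\dots,n\}$ are written in one-line notation $\pi=(\pi_1,\dots,\pi_n)$; $S_n$ is the set of all of them. For a sequence $\tau=(\tau_1,\dots,\tau_m)$ of distinct numbers with $m\ge 2$, let $i(\tau)$ be the number of maximal increasing runs of consecutive entries of length at least $2$, and $d(\tau)$ the number of maximal decreasing runs of consecutive entries of length at least $2$; set $id(\tau)=i(\tau)+d(\tau)$. Equivalently, $id(\tau)=1+\#\{k: 2\le k\le m-1,\ (\tau_k-\tau_{k-1})(\tau_{k+1}-\tau_k)<0\}$. For $\pi\in S_n$, let $X(\pi)$ be the collection of all subsequences $\tau=(\pi_{j_1},\dots,\pi_{j_m})$ with $j_1<\dots<j_m$ and $m\ge 3$, and $t(\pi)=\sum_{\tau\in X(\pi)} id(\tau)$. Define $RC(n)=\{\pi\in S_n : t(\pi)=\max_{\sigma\in S_n} t(\sigma)\}$. *)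

From mathcomp Require Import all_boot all_order all_algebra.
Set Implicit Arguments. Unset Strict Implicit. Unset Printing Implicit Defensive.
Import Order.TTheory GRing.Theory Num.Theory.

(* pi is a permutation of [n] = {1,...,n} in one-line notation *)
Definition is_perm (n : nat) (pi : seq nat) : Prop := perm_eq pi (iota 1 n).

(* id(tau) = 1 + #{k : 2 <= k <= m-1, (tau_k - tau_{k-1})(tau_{k+1} - tau_k) < 0}
   (1-based k); here 0-based: 1 <= k < m - 1. Differences taken in int. *)
Definition idn (tau : seq nat) : nat :=
  1 + \sum_(1 <= k < (size tau).-1)
        (((nth 0 tau k)%:Z - (nth 0 tau k.-1)%:Z) *
         ((nth 0 tau k.+1)%:Z - (nth 0 tau k)%:Z) < 0)%R.

(* t(pi) = sum over all subsequences (selected by a set of positions, i.e. a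
   mask) with at least 3 entries, of id of the subsequence. *)
Definition tsum (pi : seq nat) : nat :=
  \sum_(b : (size pi).-tuple bool | 3 <= count id b) idn (mask b pi).

Definition RC (n : nat) (pi : seq nat) : Prop :=
  is_perm n pi /\ forall sigma, is_perm n sigma -> tsum sigma <= tsum pi.

(* 1-based entry pi_i *)
Definition entry (pi : seq nat) (i : nat) : nat := nth 0 pi i.-1.

Definition alternating (pi : seq nat) : Prop :=
  forall i, 1 <= i < size pi ->
    if odd i then entry pi i < entry pi i.+1 else entry pi i > entry pi i.+1.

Definition rev_alternating (pi : seq nat) : Prop :=
  forall i, 1 <= i < size pi ->
    if odd i then entry pi i > entry pi i.+1 else entry pi i < entry pi i.+1.

(* The quantity t(pi) is a constant depending only on n plus the sum, over all
   subsequences, of their numbers of turning points.  Exchanging two entries with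
   consecutive values changes the turning status only of the triples through both
   positions, and such a triple is counted 2^(number of free entries outside it)
   times, so the outer neighbour next to the pair outweighs all farther ones.
   Hence no such exchange can increase t at a maximiser.  For an alternating
   maximiser this forces: if the value k sits at an interior peak then so does
   k + 1, and if k sits at an end or at a peak then so does k + 1.  Pushing these
   properties upwards from pi_i to pi_1 and pi_n gives the claim; the
   reverse-alternating case follows by the complement x |-> n + 1 - x, which
   preserves t. *)

From mathcomp Require Import all_boot all_order all_algebra zify.
Set Implicit Arguments. Unset Strict Implicit.

Definition turn (a b c : nat) : bool :=
  ((b%:Z - a%:Z) * (c%:Z - b%:Z) < 0)%R.

Lemma turnE a b c : turn a b c = (a < b) && (c < b) || (b < a) && (b < c).
Proof.
rewrite /turn; case: (boolP (_ < 0)%R) => h; apply/esym.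
  by apply/orP; case: (ltngtP a b); case: (ltngtP c b); try (by left); try (by right); nia.
by apply/negbTE/negP => /orP [] /andP [? ?]; move/negP: h; apply; nia.
Qed.

Lemma turnC a b c : turn a b c = turn c b a.
Proof. by rewrite !turnE andbC [(b < a) && _]andbC. Qed.

Fixpoint turns (s : seq nat) : nat :=
  if s is a :: ((b :: c :: _) as t) then turn a b c + turns t else 0.

Definition first_turn (s : seq nat) : nat :=
  if s is [:: a, b, c & _] then turn a b c else 0.

Lemma turns_cons x s : turns (x :: s) = first_turn (x :: s) + turns s.
Proof. by case: s => [|a [|b s]]. Qed.

Lemma turns_small s : size s < 3 -> turns s = 0.
Proof. by case: s => [|a [|b [|c s]]]. Qed.

Lemma idn_turns s : idn s = 1 + turns s.
Proof.
rewrite /idn; congr (_ + _); elim: s => [|a t IH]; first by rewrite big_geq.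
case: t IH => [|b [|c r]] IH; try by rewrite big_geq.
rewrite big_ltn // big_add1 /=; congr (_ + _); rewrite -[RHS]IH.
by apply: eq_big_nat => -[].
Qed.

Lemma sum_tuple_cons m (F : m.+1.-tuple bool -> nat) :
  \sum_(t : m.+1.-tuple bool) F t =
  \sum_(b : bool) \sum_(t : m.-tuple bool) F [tuple of b :: t].
Proof.
rewrite pair_big /=.
rewrite (reindex (fun p : bool * m.-tuple bool => [tuple of p.1 :: p.2])) //=.
exists (fun t : m.+1.-tuple bool => (thead t, [tuple of behead t])).
  by case=> b t _ /=; rewrite theadE; congr pair; apply: val_inj.
by move=> t _ /=; rewrite [RHS]tuple_eta.
Qed.

Lemma sum_mask_nil T (F : seq T -> nat) :
  \sum_(b : (size (Nil T)).-tuple bool) F (mask b [::]) = F [::].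
Proof.
under eq_bigr do rewrite mask0.
by rewrite sum_nat_const card_tuple /= mul1n.
Qed.

Lemma sum_mask_cons T (F : seq T -> nat) x s :
  \sum_(b : (size (x :: s)).-tuple bool) F (mask b (x :: s)) =
  \sum_(b : (size s).-tuple bool) F (x :: mask b s) +
  \sum_(b : (size s).-tuple bool) F (mask b s).
Proof. by rewrite sum_tuple_cons big_bool. Qed.

(* Turning points summed over all subsequences of [s] (cf. [sum_turns_mask]);
   an entry [z] followed by [t] starts [2 ^ size t] subsequences. *)
Fixpoint sturn2 x y s :=
  if s is z :: t then 2 ^ size t * turn x y z + sturn2 x y t else 0.
Fixpoint sturn1 x s := if s is y :: t then sturn2 x y t + sturn1 x t else 0.
Fixpoint sturns s := if s is x :: t then 2 * sturns t + sturn1 x t else 0.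

Lemma sum_first_turn2 x y s :
  \sum_(b : (size s).-tuple bool) first_turn [:: x, y & mask b s] = sturn2 x y s.
Proof.
pose F u := first_turn [:: x, y & u].
elim: s => [|z s IH]; first by rewrite (sum_mask_nil F).
by rewrite (sum_mask_cons F) IH /= sum_nat_const card_tuple card_bool mulnC.
Qed.

Lemma sum_first_turn1 x s :
  \sum_(b : (size s).-tuple bool) first_turn (x :: mask b s) = sturn1 x s.
Proof.
pose F u := first_turn (x :: u).
elim: s => [|y s IH]; first by rewrite (sum_mask_nil F).
by rewrite (sum_mask_cons F) IH sum_first_turn2.
Qed.

Lemma sum_turns_mask s :
  \sum_(b : (size s).-tuple bool) turns (mask b s) = sturns s.
Proof.
elim: s => [|x s IH]; first by rewrite (sum_mask_nil turns).
rewrite (sum_mask_cons turns) [sturns _]/= -IH -sum_first_turn1.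
under eq_bigr do rewrite turns_cons.
by rewrite big_split /=; lia.
Qed.

Definition nmask3 m := \sum_(b : m.-tuple bool | 3 <= count id b) 1.

Lemma tsumE s : tsum s = nmask3 (size s) + sturns s.
Proof.
rewrite /tsum /nmask3 -sum_turns_mask.
under eq_bigr do rewrite idn_turns.
rewrite big_split /=; congr (_ + _).
rewrite [RHS](bigID (fun b : (size s).-tuple bool => 3 <= count id b)) /=.
rewrite [X in _ = _ + X]big1 ?addn0 // => b; rewrite -ltnNge => hb.
by rewrite turns_small // size_mask // size_tuple.
Qed.

Definition turn_stable (h : nat -> nat) (P : pred nat) :=
  forall a b c, P a -> P b -> P c -> turn (h a) (h b) (h c) = turn a b c.

Lemma turn_stable_mono h (P : pred nat) :
  {in P &, {mono h : a b / a < b}} -> turn_stable h P.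
Proof. by move=> hm a b c pa pb pc; rewrite !turnE !hm. Qed.

Lemma turn_stable_anti h (P : pred nat) :
  {in P &, {mono h : a b /~ a < b}} -> turn_stable h P.
Proof. by move=> hm a b c pa pb pc; rewrite !turnE !hm // orbC. Qed.

Section TurnStable.
Variables (h : nat -> nat) (P : pred nat).
Hypothesis hP : turn_stable h P.

Lemma sturn2_map x y s : P x -> P y -> all P s ->
  sturn2 (h x) (h y) (map h s) = sturn2 x y s.
Proof.
move=> px py; elim: s => //= z s IH /andP [pz ps].
by rewrite size_map IH // hP.
Qed.

Lemma sturn1_map x s : P x -> all P s -> sturn1 (h x) (map h s) = sturn1 x s.
Proof.
move=> px; elim: s => //= y s IH /andP [py ps].
by rewrite IH // sturn2_map.
Qed.

Lemma sturns_map s : all P s -> sturns (map h s) = sturns s.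
Proof.
elim: s => //= x s IH /andP [px ps].
by rewrite IH // sturn1_map.
Qed.

End TurnStable.

Lemma sturn2_cat x y s1 s2 :
  sturn2 x y (s1 ++ s2) = 2 ^ size s2 * sturn2 x y s1 + sturn2 x y s2.
Proof.
elim: s1 => [|z s1 IH] /=; first by rewrite muln0.
by rewrite IH size_cat expnD; lia.
Qed.

Lemma eq_in_sturn2 x y x' y' s :
  {in s, forall z, turn x' y' z = turn x y z} -> sturn2 x' y' s = sturn2 x y s.
Proof.
elim: s => //= z s IH eq_turn.
by rewrite eq_turn ?mem_head // IH // => w sw; rewrite eq_turn // inE sw orbT.
Qed.

Lemma eq_in_sturn1 x x' s :
  {in s &, forall y z, turn x' y z = turn x y z} -> sturn1 x' s = sturn1 x s.
Proof.
elim: s => //= y s IH eq_turn.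
rewrite (@eq_in_sturn2 x y) ?IH // => [a b sa sb | z sz].
  by rewrite eq_turn // inE ?sa ?sb orbT.
by rewrite eq_turn // inE ?sz ?eqxx ?orbT.
Qed.

Lemma sturn2_lt_exp x y s : sturn2 x y s < 2 ^ size s.
Proof. by elim: s => //= z s IH; rewrite expnS; case: (turn x y z); lia. Qed.

Lemma sturn2_lt_head x y z s : turn y x z -> ~~ turn x y z ->
  sturn2 x y (z :: s) < sturn2 y x (z :: s).
Proof. by move=> /= -> /negbTE ->; have := sturn2_lt_exp x y s; lia. Qed.

Definition adjacent (u v : nat) := (u == v.+1) || (v == u.+1).
Definition avoids (u v z : nat) := (z != u) && (z != v).

Section AdjacentSwap.
Variables u v : nat.
Hypothesis adj_uv : adjacent u v.

Lemma turn_exchange x y : avoids u v x -> avoids u v y ->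
  [/\ turn x y u = turn x y v, turn x u y = turn x v y & turn u x y = turn v x y].
Proof.
move: adj_uv; rewrite /adjacent /avoids => ? /andP [? ?] /andP [? ?].
by split; rewrite !turnE; apply/idP/idP; lia.
Qed.

Lemma turn_adjacent_left x : avoids u v x ->
  (x < u) = (u < v) -> turn u v x && ~~ turn v u x.
Proof.
move: adj_uv; rewrite /adjacent /avoids !turnE => ? /andP [? ?] ?.
by apply/andP; split; apply/idP; lia.
Qed.

Lemma turn_adjacent_right x : avoids u v x ->
  (v < x) = (u < v) -> turn v u x && ~~ turn u v x.
Proof.
move: adj_uv; rewrite /adjacent /avoids !turnE => ? /andP [? ?] ?.
by apply/andP; split; apply/idP; lia.
Qed.

Let rep (a : nat) : nat := if a == v then u else a.

Let rep_stable : turn_stable rep (predC1 u).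
Proof.
apply: turn_stable_mono => a b; rewrite !inE /rep => au bu.
by move: adj_uv; rewrite /adjacent => ?; do 2 case: eqP => ?; apply/idP/idP; lia.
Qed.

Let exchange_map B C : all (avoids u v) B -> all (avoids u v) C ->
  B ++ u :: C = map rep (B ++ v :: C) /\ all (predC1 u) (B ++ v :: C).
Proof.
have map_rep D : all (avoids u v) D -> map rep D = D.
  by move=> /allP hD; apply: map_id_in => z /hD /andP [_ /negbTE]; rewrite /rep => ->.
have avoids_u D : all (avoids u v) D -> all (predC1 u) D.
  by move=> /allP hD; apply/allP => z /hD /andP [].
move=> hB hC; split; first by rewrite map_cat /= !map_rep // /rep eqxx.
by rewrite all_cat /= !avoids_u // andbT /=; move: adj_uv; rewrite /adjacent; lia.
Qed.

Lemma sturns_exchange B C : all (avoids u v) B -> all (avoids u v) C ->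
  sturns (B ++ u :: C) = sturns (B ++ v :: C).
Proof.
by move=> hB hC; have [-> avoid_u] := exchange_map hB hC; exact (sturns_map rep_stable avoid_u).
Qed.

Lemma sturn1_exchange x B C : avoids u v x -> all (avoids u v) B -> all (avoids u v) C ->
  sturn1 x (B ++ u :: C) = sturn1 x (B ++ v :: C).
Proof.
move=> /andP [xu xv] hB hC; have [-> avoid_u] := exchange_map hB hC.
have {1}-> : x = rep x by rewrite /rep (negbTE xv).
exact (sturn1_map rep_stable xu avoid_u).
Qed.

Lemma sturn1_swap x A B C : avoids u v x ->
  all (avoids u v) A -> all (avoids u v) B -> all (avoids u v) C ->
  sturn1 x (A ++ v :: B ++ u :: C) + 2 ^ size C * turn x u v =
  sturn1 x (A ++ u :: B ++ v :: C) + 2 ^ size C * turn x v u.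
Proof.
move=> hx hA hB hC; elim: A hA => [|a A IH] /= => [_ | /andP [ha hA]].
  have eD D : all (avoids u v) D -> sturn2 x u D = sturn2 x v D.
    by move=> /allP hD; apply: eq_in_sturn2 => z /hD hz; case: (turn_exchange hx hz).
  by rewrite sturn1_exchange // !sturn2_cat /= !eD //; lia.
have [eu _ _] := turn_exchange hx ha.
by rewrite !sturn2_cat /= !sturn2_cat /= !size_cat /= eu; move: (IH hA); lia.
Qed.

Lemma sturn1_swap_head B C : all (avoids u v) B -> all (avoids u v) C ->
  sturn1 v (B ++ u :: C) + sturn2 u v C = sturn1 u (B ++ v :: C) + sturn2 v u C.
Proof.
move=> hB hC; elim: B hB => [|b B IH] /= => [_ | /andP [hb hB]].
  suff -> : sturn1 v C = sturn1 u C by lia.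
  apply: eq_in_sturn1 => y z /(allP hC) hy /(allP hC) hz.
  by case: (turn_exchange hy hz).
have eD D : all (avoids u v) D -> sturn2 u b D = sturn2 v b D.
  by move=> /allP hD; apply: eq_in_sturn2 => z /hD hz; case: (turn_exchange hb hz).
by rewrite !sturn2_cat /= !eD // turnC; move: (IH hB); lia.
Qed.

(* Only the triples through both exchanged positions change; such a triple
   through an entry [a] of [A] is counted 2 ^ (entries of [A] before [a]) times,
   hence [rev A]. *)
Lemma sturns_swap A B C :
  all (avoids u v) A -> all (avoids u v) B -> all (avoids u v) C ->
  sturns (A ++ v :: B ++ u :: C) + 2 ^ size A * sturn2 u v C +
    2 ^ size C * sturn2 v u (rev A) =
  sturns (A ++ u :: B ++ v :: C) + 2 ^ size A * sturn2 v u C +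
    2 ^ size C * sturn2 u v (rev A).
Proof.
move=> hA hB hC; elim: A hA => [|a A IH] /= => [_ | /andP [ha hA]].
  by rewrite sturns_exchange //; move: (sturn1_swap_head hB hC); lia.
rewrite rev_cons -cats1 !sturn2_cat /= expnS [turn v u a]turnC [turn u v a]turnC.
by move: (IH hA) (sturn1_swap ha hA hB hC); lia.
Qed.

Lemma sturns_swap_lt A B C :
  all (avoids u v) A -> all (avoids u v) B -> all (avoids u v) C ->
  (A != [::] -> turn u v (last 0 A) && ~~ turn v u (last 0 A)) ->
  (C != [::] -> turn v u (head 0 C) && ~~ turn u v (head 0 C)) ->
  (A != [::]) || (C != [::]) ->
  sturns (A ++ u :: B ++ v :: C) < sturns (A ++ v :: B ++ u :: C).
Proof.
move=> hA hB hC hL hR hAC; have := sturns_swap hA hB hC.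
have ltA : A != [::] -> sturn2 v u (rev A) < sturn2 u v (rev A).
  case/lastP: A {hA hAC} hL => // A a hL _.
  have /andP [] : turn u v a && ~~ turn v u a.
    by rewrite -(last_rcons 0 A a); apply: hL; case: A.
  by rewrite rev_rcons; apply: sturn2_lt_head.
have ltC : C != [::] -> sturn2 u v C < sturn2 v u C.
  by case: C {hC hAC} hR => // c C /(_ isT) /andP [] h1 h2 _; apply: sturn2_lt_head.
have scale k m n : m < n -> 2 ^ k * m < 2 ^ k * n by rewrite ltn_pmul2l ?expn_gt0.
case: (eqVneq A [::]) => [eA | /ltA /(scale (size C)) lA];
  case: (eqVneq C [::]) => [eC | /ltC /(scale (size A)) lC].
- by move: hAC; rewrite eA eC.
- by rewrite eA /= in lC *; lia.
- by rewrite eC /= in lA *; lia.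
- by lia.
Qed.

End AdjacentSwap.

Section Perm.
Variables (n : nat) (s : seq nat).
Hypothesis perm_s : is_perm n s.

Lemma is_perm_size : size s = n.
Proof. by rewrite (perm_size perm_s) size_iota. Qed.

Lemma is_perm_uniq : uniq s.
Proof. by rewrite (perm_uniq perm_s) iota_uniq. Qed.

Lemma is_perm_mem x : (x \in s) = (0 < x <= n).
Proof. by rewrite (perm_mem perm_s) mem_iota; apply/idP/idP; lia. Qed.

Lemma is_perm_nth i : i < n -> 0 < nth 0 s i <= n.
Proof. by move=> lt_in; rewrite -is_perm_mem mem_nth // is_perm_size. Qed.

Lemma is_perm_position k : 0 < k <= n -> exists2 r, r < n & nth 0 s r = k.
Proof.
rewrite -is_perm_mem => sk; exists (index k s); last exact: nth_index.
by rewrite -is_perm_size index_mem.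
Qed.

Lemma is_perm_value_ind (P : nat -> Prop) :
  (forall p q, p < n -> q < n -> nth 0 s q = (nth 0 s p).+1 -> P p -> P q) ->
  forall p q, p < n -> q < n -> nth 0 s p <= nth 0 s q -> P p -> P q.
Proof.
move=> step p q lt_pn lt_qn le_pq Pp.
have [d eq_q] : exists d, nth 0 s q = nth 0 s p + d by exists (nth 0 s q - nth 0 s p); lia.
elim: d q lt_qn eq_q {le_pq} => [|d IH] q lt_qn eq_q.
  have -> : q = p.
    by apply/eqP; rewrite -(nth_uniq 0 _ _ is_perm_uniq) ?is_perm_size // eq_q addn0.
  exact: Pp.
have := is_perm_nth lt_pn; have := is_perm_nth lt_qn => vq vp.
have [r lt_rn eq_r] := is_perm_position (k := nth 0 s p + d) ltac:(lia).
by apply: (step r) => //; [rewrite eq_q eq_r addnS | apply: IH].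
Qed.

End Perm.

Lemma cat_take_nth2 (s : seq nat) i j : i < j < size s ->
  s = take i s ++ nth 0 s i :: take (j - i.+1) (drop i.+1 s) ++ nth 0 s j :: drop j.+1 s.
Proof.
move=> /andP [lt_ij lt_js].
have drop_j : drop j s = nth 0 s j :: drop j.+1 s by rewrite (drop_nth 0).
have drop_i : drop i s = nth 0 s i :: drop i.+1 s.
  by rewrite (drop_nth 0) // (ltn_trans lt_ij).
have drop_Si : drop i.+1 s = take (j - i.+1) (drop i.+1 s) ++ drop j s.
  by rewrite -{1}(cat_take_drop (j - i.+1) (drop i.+1 s)) drop_drop subnK.
by rewrite -drop_j -drop_Si -drop_i cat_take_drop.
Qed.

Lemma uniq_avoids A B C u v : uniq (A ++ u :: B ++ v :: C) ->
  [/\ all (avoids u v) A, all (avoids u v) B & all (avoids u v) C].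
Proof.
have perm_uv : perm_eq (A ++ u :: B ++ v :: C) [:: u, v & A ++ B ++ C].
  by apply/permP => p; rewrite /= !count_cat /= count_cat /=; lia.
rewrite (perm_uniq perm_uv) /= inE negb_or => /and3P [/andP [_ uD] vD _].
have avD z : z \in A ++ B ++ C -> avoids u v z.
  by move=> zD; apply/andP; split; [apply: contraNneq _ uD | apply: contraNneq _ vD] => <-.
by split; apply/allP => z zs; apply: avD; rewrite !mem_cat zs ?orbT.
Qed.

Lemma RC_no_improving_swap n s i j : RC n s -> i < j < n ->
  adjacent (nth 0 s i) (nth 0 s j) -> (0 < i) || (j.+1 < n) ->
  (0 < i -> (nth 0 s i.-1 < nth 0 s i) = (nth 0 s i < nth 0 s j)) ->
  (j.+1 < n -> (nth 0 s j < nth 0 s j.+1) = (nth 0 s i < nth 0 s j)) -> False.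
Proof.
case=> perm_s max_s /andP [lt_ij lt_jn] adj_ij inner left_ij right_ij.
have size_s := is_perm_size perm_s.
set u := nth 0 s i in adj_ij left_ij right_ij.
set v := nth 0 s j in adj_ij left_ij right_ij.
set A := take i s; set B := take (j - i.+1) (drop i.+1 s); set C := drop j.+1 s.
have def_s : s = A ++ u :: B ++ v :: C by apply: cat_take_nth2; rewrite size_s lt_ij.
have [avA avB avC] : [/\ all (avoids u v) A, all (avoids u v) B & all (avoids u v) C].
  by apply: uniq_avoids; rewrite -def_s (is_perm_uniq perm_s).
have perm_swap : perm_eq (A ++ v :: B ++ u :: C) s.
  rewrite [X in perm_eq _ X]def_s; apply/permP => p.
  by rewrite !count_cat /= !count_cat /=; lia.
have size_A : size A = i by rewrite size_take size_s (ltn_trans lt_ij).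
have size_C : size C = n - j.+1 by rewrite size_drop size_s.
have := max_s _ (perm_trans perm_swap perm_s).
rewrite !tsumE (perm_size perm_swap) leq_add2l [X in _ <= sturns X]def_s leqNgt.
move=> /negP; apply.
apply: sturns_swap_lt => //.
- rewrite -size_eq0 size_A -lt0n => lt0i; apply: turn_adjacent_left => //.
    by apply: (allP avA); rewrite -nth_last mem_nth // size_A prednK.
  by rewrite -nth_last size_A nth_take ?prednK // left_ij.
- rewrite -size_eq0 size_C -lt0n subn_gt0 => lt_Sjn; apply: turn_adjacent_right => //.
    by apply: (allP avC); rewrite -nth0 mem_nth // size_C subn_gt0.
  by rewrite -nth0 nth_drop addn0 right_ij.
- by rewrite -!size_eq0 size_A size_C; lia.
Qed.

Section ZigzagRC.
Variables (n : nat) (s : seq nat).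
Hypothesis RC_s : RC n s.
(* 0-based positions: s_0 < s_1 > s_2 < ... *)
Hypothesis zigzag_s : forall j, j.+1 < n -> (nth 0 s j < nth 0 s j.+1) = ~~ odd j.

Let zigzag_pred j : 0 < j -> j < n -> (nth 0 s j.-1 < nth 0 s j) = odd j.
Proof. by case: j => // j _ lt_jn; rewrite zigzag_s //= negbK. Qed.

Lemma RC_peak_succ p q : odd p -> p.+1 < n -> q < n ->
  nth 0 s q = (nth 0 s p).+1 -> odd q && (q.+1 < n).
Proof.
move=> odd_p lt_Spn lt_qn eq_q; apply/negPn/negP; rewrite negb_and -leqNgt => not_peak.
have lt0p : 0 < p by case: p odd_p {lt_Spn eq_q}.
case: (ltngtP p q) => [lt_pq | lt_qp | eq_pq]; last by move: eq_q; rewrite eq_pq; lia.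
- have val_pq : (nth 0 s p < nth 0 s q) = true by rewrite eq_q ltnSn.
  apply: (@RC_no_improving_swap n s p q); rewrite ?val_pq ?lt0p //.
  + by rewrite lt_pq.
  + by rewrite /adjacent eq_q eqxx orbT.
  + by move=> _; rewrite zigzag_pred //; lia.
  + by move=> lt_Sqn; rewrite zigzag_s //; move: not_peak; rewrite leqNgt lt_Sqn orbF.
- have val_qp : (nth 0 s q < nth 0 s p) = false by rewrite eq_q ltnNge leqnSn.
  apply: (@RC_no_improving_swap n s q p); rewrite ?val_qp //.
  + by rewrite lt_qp ltnW.
  + by rewrite /adjacent eq_q eqxx.
  + by rewrite lt_Spn orbT.
  + move=> lt0q; have lt_Sqn : q.+1 < n by lia.
    by rewrite zigzag_pred //; move: not_peak; rewrite leqNgt lt_Sqn orbF => /negbTE.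
  + by move=> _; rewrite zigzag_s // odd_p.
Qed.

Lemma RC_nonvalley_succ p q : p < n -> q < n -> [|| p == 0, p.+1 == n | odd p] ->
  nth 0 s q = (nth 0 s p).+1 -> [|| q == 0, q.+1 == n | odd q].
Proof.
move=> lt_pn lt_qn nonvalley_p eq_q; apply/negPn/negP.
rewrite !negb_or => /and3P [/eqP q_neq0 /eqP q_neqn even_q].
case: (ltngtP p q) => [lt_pq | lt_qp | eq_pq]; last by move: eq_q; rewrite eq_pq; lia.
- have val_pq : (nth 0 s p < nth 0 s q) = true by rewrite eq_q ltnSn.
  apply: (@RC_no_improving_swap n s p q); rewrite ?val_pq //.
  + by rewrite lt_pq.
  + by rewrite /adjacent eq_q eqxx orbT.
  + by apply/orP; right; lia.
  + move=> lt0p; rewrite zigzag_pred //.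
    by case/or3P: nonvalley_p => [/eqP ? | /eqP ? | //]; exfalso; lia.
  + by move=> lt_Sqn; rewrite zigzag_s // even_q.
- have val_qp : (nth 0 s q < nth 0 s p) = false by rewrite eq_q ltnNge leqnSn.
  apply: (@RC_no_improving_swap n s q p); rewrite ?val_qp //.
  + by rewrite lt_qp.
  + by rewrite /adjacent eq_q eqxx.
  + by apply/orP; left; lia.
  + by move=> lt0q; rewrite zigzag_pred // (negbTE even_q).
  + move=> lt_Spn; rewrite zigzag_s //; apply: negbF.
    by case/or3P: nonvalley_p => [/eqP ? | /eqP ? | //]; exfalso; lia.
Qed.

Lemma RC_zigzag_extremes i : 0 < i -> i.+1 < n ->
  (odd i -> maxn (nth 0 s 0) (nth 0 s n.-1) < nth 0 s i) /\
  (~~ odd i -> nth 0 s i < minn (nth 0 s 0) (nth 0 s n.-1)).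
Proof.
move=> lt0i lt_Sin; have perm_s := RC_s.1.
have lt_in : i < n by lia.
have lt_Nn : n.-1 < n by lia.
have peak_up : forall p q, p < n -> q < n -> nth 0 s p <= nth 0 s q ->
    odd p && (p.+1 < n) -> odd q && (q.+1 < n).
  apply: (is_perm_value_ind perm_s (P := fun p => odd p && (p.+1 < n))).
  move=> p q _ lt_qn eq_q /andP [odd_p lt_Spn].
  exact: RC_peak_succ odd_p lt_Spn lt_qn eq_q.
have nonvalley_up : forall p q, p < n -> q < n -> nth 0 s p <= nth 0 s q ->
    [|| p == 0, p.+1 == n | odd p] -> [|| q == 0, q.+1 == n | odd q].
  apply: (is_perm_value_ind perm_s (P := fun p => [|| p == 0, p.+1 == n | odd p])).
  by move=> p q lt_pn lt_qn eq_q nv_p; exact: RC_nonvalley_succ lt_pn lt_qn nv_p eq_q.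
split=> [odd_i | even_i].
  have peak_i : odd i && (i.+1 < n) by rewrite odd_i lt_Sin.
  rewrite gtn_max; apply/andP; split; rewrite ltnNge; apply/negP => le_i.
    by have /andP [] := peak_up i 0 lt_in ltac:(lia) le_i peak_i.
  by have /andP [_] := peak_up i n.-1 lt_in lt_Nn le_i peak_i; lia.
rewrite leq_min; apply/andP; split; rewrite ltnNge; apply/negP => le_i.
  have := nonvalley_up 0 i ltac:(lia) lt_in le_i isT.
  by rewrite (negbTE even_i) orbF => /orP [] /eqP; lia.
have nonvalley_N : [|| n.-1 == 0, n.-1.+1 == n | odd n.-1].
  by rewrite prednK ?eqxx ?orbT //; lia.
have := nonvalley_up n.-1 i lt_Nn lt_in le_i nonvalley_N.
by rewrite (negbTE even_i) orbF => /orP [] /eqP; lia.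
Qed.

End ZigzagRC.

Lemma alternating_zigzag s : alternating s ->
  forall j, j.+1 < size s -> (nth 0 s j < nth 0 s j.+1) = ~~ odd j.
Proof.
move=> alt_s j lt_Sjs; have := alt_s j.+1; rewrite /entry /= lt_Sjs => /(_ isT).
by case: (odd j) => /= [lt_Sj | ->] //; apply/negbTE; rewrite -leqNgt ltnW.
Qed.

Lemma RC_alternating_extremes n pi : RC n pi -> alternating pi ->
  forall i, 1 < i < n ->
    (~~ odd i -> maxn (entry pi 1) (entry pi n) < entry pi i) /\
    (odd i -> entry pi i < minn (entry pi 1) (entry pi n)).
Proof.
move=> RC_pi alt_pi i /andP [lt1i lt_in].
have zigzag_pi := alternating_zigzag alt_pi; rewrite (is_perm_size RC_pi.1) in zigzag_pi.
have := RC_zigzag_extremes RC_pi zigzag_pi (i := i.-1) ltac:(lia) ltac:(lia).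
by rewrite /entry -[odd i.-1]negbK; case: i lt1i {lt_in} => //= i _; rewrite negbK.
Qed.

Definition compl n x := n.+1 - x.

Lemma compl_perm n s : is_perm n s -> is_perm n (map (compl n) s).
Proof.
move=> perm_s; have mem_s := is_perm_mem perm_s.
apply: uniq_perm; rewrite ?iota_uniq //.
  rewrite map_inj_in_uniq ?(is_perm_uniq perm_s) // => x y.
  by rewrite !mem_s /compl => ? ? ?; lia.
move=> y; rewrite mem_iota; apply/mapP/idP => [[x] | y_in].
  by rewrite mem_s /compl => ? ->; lia.
by exists (n.+1 - y); rewrite ?mem_s /compl; lia.
Qed.

Lemma tsum_compl n s : is_perm n s -> tsum (map (compl n) s) = tsum s.
Proof.
move=> perm_s; rewrite !tsumE size_map; congr (_ + _).
apply: (sturns_map (P := fun x => x <= n)).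
  by apply: turn_stable_anti => x y; rewrite /compl => ? ?; apply/idP/idP; lia.
by apply/allP => x; rewrite (is_perm_mem perm_s); lia.
Qed.

Lemma RC_compl n s : RC n s -> RC n (map (compl n) s).
Proof.
case=> perm_s max_s; split; first exact: compl_perm.
move=> sigma perm_sigma; rewrite tsum_compl // -(tsum_compl perm_sigma).
exact/max_s/compl_perm.
Qed.

Lemma entry_compl n s i : 0 < i <= size s -> entry (map (compl n) s) i = n.+1 - entry s i.
Proof. by move=> ?; rewrite /entry (nth_map 0) //; lia. Qed.

Lemma rev_alternating_compl n s : is_perm n s -> rev_alternating s ->
  alternating (map (compl n) s).
Proof.
move=> perm_s ralt_s i; rewrite size_map => i_range.
have size_s := is_perm_size perm_s.
have entry_le k : 0 < k <= size s -> entry s k <= n.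
  by move=> k_range; have := is_perm_nth perm_s (i := k.-1); rewrite /entry; lia.
have := entry_le i ltac:(lia); have := entry_le i.+1 ltac:(lia).
rewrite !entry_compl; try lia.
by have := ralt_s i i_range; case: (odd i); lia.
Qed.

Theorem mainTheorem3 (n : nat) (pi : seq nat) :
  2 <= n -> RC n pi ->
  (alternating pi ->
     forall i, 1 < i < n ->
       (~~ odd i -> entry pi i > maxn (entry pi 1) (entry pi n)) /\
       (odd i -> entry pi i < minn (entry pi 1) (entry pi n))) /\
  (rev_alternating pi ->
     forall i, 1 < i < n ->
       (~~ odd i -> entry pi i < minn (entry pi 1) (entry pi n)) /\
       (odd i -> entry pi i > maxn (entry pi 1) (entry pi n))).
Proof.
move=> _ RC_pi; split; first exact: RC_alternating_extremes.
move=> ralt_pi i i_range; have [perm_pi _] := RC_pi.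
have := RC_alternating_extremes (RC_compl RC_pi)
  (rev_alternating_compl perm_pi ralt_pi) i_range.
by rewrite !entry_compl ?(is_perm_size perm_pi); lia.
Qed.
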